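(* Let $\Omega\subset\mathbb{R}^2$ be a smooth bounded domain, $(u_p)_{p>1}$ solutions of $-\Delta u=|u|^{p-1}u$ in $\Omega$, $u=0$ on $\partial\Omega$, with $p\int_\Omega|\nabla u_p|^2dx\to\beta\in\mathbb{R}$, and let $k\ge1$ and families $(x_{i,p})$, $i=1,\dots,k$, with $p|u_p(x_{i,p})|^{p-1}\to+\infty$, satisfy (along a sequence $p\to+\infty$) $(\mathcal P_1^k)$, $(\mathcal P_2^k)$, $(\mathcal P_3^k)$. Let $(x_p)\subset\Omega$ with $p|u_p(x_p)|^{p-1}\to+\infty$, $\mu_p:=(p|u_p(x_p)|^{p-1})^{-1/2}$, and let $i\in\{1,\dots,k\}$ be such that (up to a sequence) $R_{k,p}(x_p)=|x_{i,p}-x_p|$. If $\frac{|x_p-x_{i,p}|}{\mu_{i,p}}\to+\infty$, then $\frac{\mu_{i,p}}{\mu_p}\to0$.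
   Context: $\mu_{i,p}:=(p|u_p(x_{i,p})|^{p-1})^{-1/2}$, $R_{k,p}(x):=\min_{i\le k}|x-x_{i,p}|$, $U(x)=\log\left(\frac{1}{1+\frac18|x|^2}\right)^2$. $(\mathcal P_1^k)$: $|x_{i,p}-x_{j,p}|/\mu_{i,p}\to+\infty$ for $i\ne j$. $(\mathcal P_2^k)$: for each $i$, $v_{i,p}(x):=\frac{p}{u_p(x_{i,p})}(u_p(x_{i,p}+\mu_{i,p}x)-u_p(x_{i,p}))\to U$ in $C^1_{loc}(\mathbb{R}^2)$. $(\mathcal P_3^k)$: $\exists C>0$ with $pR_{k,p}(x)^2|u_p(x)|^{p-1}\le C$ for $p$ large and all $x\in\Omega$. *)

From mathcomp Require Import all_boot all_order all_algebra.
From mathcomp Require Import all_classical all_reals all_analysis.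
Import Order.TTheory GRing.Theory Num.Theory numFieldNormedType.Exports.
Set Implicit Arguments. Unset Strict Implicit. Unset Printing Implicit Defensive.
Local Open Scope classical_set_scope.
Local Open Scope ring_scope.

Section Defs.
Variable R : realType.
Local Notation P := (R * R)%type.

(* Euclidean norm on R^2 (the library norm on R * R is the max norm). *)
Definition enorm (x : P) : R := Num.sqrt (x.1 ^+ 2 + x.2 ^+ 2).

Definition d1 (f : P -> R) (x : P) : R := 'D_((1:R), (0:R)) f x.
Definition d2 (f : P -> R) (x : P) : R := 'D_((0:R), (1:R)) f x.
Definition lap (f : P -> R) (x : P) : R := d1 (d1 f) x + d2 (d2 f) x.
Definition grad_sq (f : P -> R) (x : P) : R := d1 f x ^+ 2 + d2 f x ^+ 2.

Definition C2_at (f : P -> R) (x : P) : Prop :=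
  [/\ differentiable f x, differentiable (d1 f) x, differentiable (d2 f) x,
      {for x, continuous (d1 (d1 f))} /\ {for x, continuous (d2 (d1 f))}
    & {for x, continuous (d1 (d2 f))} /\ {for x, continuous (d2 (d2 f))}].

Definition smooth1 (g : R -> R) : Prop :=
  forall (n : nat) (t : R), derivable (derive1n n g) t 1.

Definition boundary (O : set P) : set P := closure O `\` O.

(* smooth boundary: near each boundary point, after a rotation of the
   coordinate axes, O is the open supergraph of a C^infinity function *)
Definition smooth_boundary (O : set P) : Prop :=
  forall y0, boundary O y0 ->
  exists r : R, 0 < r /\ exists c s : R, c ^+ 2 + s ^+ 2 = 1 /\
  exists g : R -> R, smooth1 g /\
  forall x : P, enorm (x - y0) < r ->
    (O x <-> g (c * x.1 + s * x.2) < - s * x.1 + c * x.2).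

Definition smooth_bounded_domain (O : set P) : Prop :=
  [/\ open O, connected O, O !=set0,
      (exists M : R, forall x, O x -> enorm x <= M) & smooth_boundary O].

Definition LE_solution (O : set P) (p : R) (u : P -> R) : Prop :=
  [/\ forall x, O x -> C2_at u x,
      {within closure O, continuous u},
      (forall x, boundary O x -> u x = 0)
    & forall x, O x -> - lap u x = (`|u x| `^ (p - 1)) * u x].

Definition energy (O : set P) (u : P -> R) : \bar R :=
  (\int[(@lebesgue_measure R \x @lebesgue_measure R)%E]_(x in O) (grad_sq u x)%:E)%E.

Definition mu_of (p : R) (u : P -> R) (x : P) : R :=
  (p * `|u x| `^ (p - 1)) `^ (- (2%:R)^-1).

Definition Rk (k : nat) (xs : 'I_k -> P) (x : P) : R :=
  inf [set enorm (x - xs j) | j in [set: 'I_k]].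

Definition Ulim (x : P) : R := ln ((1 + (8%:R)^-1 * enorm x ^+ 2)^-1 ^+ 2).

Definition rescale (p : R) (u : P -> R) (x0 : P) (m : R) (y : P) : R :=
  p / u x0 * (u (x0.1 + m * y.1, x0.2 + m * y.2) - u x0).

(* C^1_loc(R^2) convergence of v n (defined on (O - x0 n)/m n) to V:
   every closed ball is eventually contained in the domain of v n, and
   v n, grad v n converge uniformly on it to V, grad V *)
Definition C1loc_cvg (O : set P) (x0 : nat -> P) (m : nat -> R)
    (v : nat -> P -> R) (V : P -> R) : Prop :=
  forall r : R, 0 < r ->
    (\forall n \near \oo, forall y : P, enorm y <= r ->
        O ((x0 n).1 + m n * y.1, (x0 n).2 + m n * y.2)) /\
    forall e : R, 0 < e -> \forall n \near \oo, forall y : P, enorm y <= r ->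
      [/\ `|v n y - V y| < e, `|d1 (v n) y - d1 V y| < e
        & `|d2 (v n) y - d2 V y| < e].

End Defs.

From mathcomp Require Import all_boot all_order all_algebra.
From mathcomp Require Import all_classical all_reals all_analysis.
Import Order.TTheory GRing.Theory Num.Theory numFieldNormedType.Exports.
Local Open Scope classical_set_scope.
Local Open Scope ring_scope.

(* Only (P_3^k) at the point x_p is needed: with d_p := |x_p - x_{i,p}| = R_{k,p}(x_p)
   it gives d_p^2 p|u_p(x_p)|^(p-1) <= C, i.e. 1/mu_p <= sqrt C / d_p, hence
   mu_{i,p}/mu_p <= sqrt C / (d_p/mu_{i,p}), which tends to 0 by hypothesis. *)

Lemma cvg0_le_div_cvgry {R : realFieldType} {T : Type} {F : set_system T}
    {FF : Filter F} (c : R) {f g : T -> R} :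
  (\forall t \near F, 0 <= f t <= c / g t) ->
  g t @[t --> F] --> +oo -> f t @[t --> F] --> 0.
Proof.
move=> f_bounded g_to_oo; apply: (squeeze_cvgr f_bounded (cvg_cst 0)).
rewrite -[0](mulr0 c); apply: cvgM; first exact: cvg_cst.
by apply/gtr0_cvgV0 => //; exact: (proj1 (cvgryPgt _) g_to_oo 0).
Qed.

Lemma div_mu_of (R : realType) (a p : R) (u : R * R -> R) (x : R * R) :
  0 <= p * `|u x| `^ (p - 1) ->
  a / mu_of p u x = a * Num.sqrt (p * `|u x| `^ (p - 1)).
Proof. by move=> q_ge0; rewrite /mu_of powRN powR12_sqrt // invrK. Qed.

Lemma sqrtr_le_div (R : rcfType) (q d C : R) :
  0 <= q -> 0 < d -> d ^+ 2 * q <= C -> Num.sqrt q <= Num.sqrt C / d.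
Proof.
move=> q_ge0 d_gt0 dq_le; rewrite ler_pdivlMr // mulrC.
have -> : d * Num.sqrt q = Num.sqrt (d ^+ 2 * q).
  by rewrite sqrtrM ?sqr_ge0 // sqrtr_sqr gtr0_norm.
by rewrite ler_sqrt // (le_trans _ dq_le) // mulr_ge0 ?sqr_ge0.
Qed.

Lemma enorm_distC (R : realType) (x y : R * R) : enorm (x - y) = enorm (y - x).
Proof. by rewrite /enorm -opprB /= !sqrrN. Qed.

Lemma enorm_ge0 (R : realType) (x : R * R) : 0 <= enorm x.
Proof. exact: sqrtr_ge0. Qed.

Theorem proposition2p6 (R : realType) (O : set (R * R))
  (p : nat -> R) (u : nat -> R * R -> R) (beta : R)
  (k : nat) (xs : 'I_k -> nat -> R * R) (xp : nat -> R * R) (i : 'I_k) :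
  smooth_bounded_domain O ->
  (forall n, 1 < p n) ->
  p n @[n --> \oo] --> +oo ->
  (forall n, LE_solution O (p n) (u n)) ->
  ((p n)%:E * energy O (u n))%E @[n --> \oo] --> beta%:E ->
  (1 <= k)%N ->
  (forall j n, O (xs j n)) ->
  (forall j, p n * `|u n (xs j n)| `^ (p n - 1) @[n --> \oo] --> +oo) ->
  (* (P_1^k) *)
  (forall j j', j != j' ->
     enorm (xs j n - xs j' n) / mu_of (p n) (u n) (xs j n) @[n --> \oo] --> +oo) ->
  (* (P_2^k) *)
  (forall j, C1loc_cvg O (xs j) (fun n => mu_of (p n) (u n) (xs j n))
     (fun n => rescale (p n) (u n) (xs j n) (mu_of (p n) (u n) (xs j n)))
     (@Ulim R)) ->
  (* (P_3^k) *)
  (exists C : R, 0 < C /\ \forall n \near \oo, forall x, O x ->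
     p n * Rk (fun j => xs j n) x ^+ 2 * `|u n x| `^ (p n - 1) <= C) ->
  (forall n, O (xp n)) ->
  p n * `|u n (xp n)| `^ (p n - 1) @[n --> \oo] --> +oo ->
  (forall n, Rk (fun j => xs j n) (xp n) = enorm (xs i n - xp n)) ->
  enorm (xp n - xs i n) / mu_of (p n) (u n) (xs i n) @[n --> \oo] --> +oo ->
  mu_of (p n) (u n) (xs i n) / mu_of (p n) (u n) (xp n) @[n --> \oo] --> (0 : R).
Proof.
move=> _ p_gt1 _ _ _ _ _ _ _ _ [C [_ P3]] xp_in_O _ Rk_xp ratio_to_oo.
apply: (cvg0_le_div_cvgry (Num.sqrt C) _ ratio_to_oo).
near=> n.
have ratio_gt0 : 0 < enorm (xp n - xs i n) / mu_of (p n) (u n) (xs i n).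
  by near: n; exact: (proj1 (cvgryPgt _) ratio_to_oo 0).
have dq_le :
    enorm (xp n - xs i n) ^+ 2 * (p n * `|u n (xp n)| `^ (p n - 1)) <= C.
  rewrite -enorm_distC -Rk_xp mulrCA mulrA.
  by near: n; apply: filterS P3 => m /(_ _ (xp_in_O m)).
set d := enorm (xp n - xs i n) in ratio_gt0 dq_le *.
set mu_i := mu_of (p n) (u n) (xs i n) in ratio_gt0 *.
set q := p n * `|u n (xp n)| `^ (p n - 1) in dq_le *.
have q_ge0 : 0 <= q.
  by rewrite mulr_ge0 ?powR_ge0 // ltW // (lt_trans ltr01 (p_gt1 n)).
have mu_i_ge0 : 0 <= mu_i by exact: powR_ge0.
have d_gt0 : 0 < d.
  rewrite lt0r enorm_ge0 andbT; apply: contraTneq ratio_gt0 => ->.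
  by rewrite mul0r ltxx.
rewrite div_mu_of // mulr_ge0 ?sqrtr_ge0 //=.
by rewrite invf_div mulrCA ler_wpM2l // sqrtr_le_div.
Unshelve. all: by end_near.
Qed.
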